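(* Let $n\ge m$ and let $\ell,N,p,q\in\mathbb{N}$. Let $\mathcal{S}=\{x\in\mathbb{R}^n : Fx\le\mathbf{1}_p\}$ be a C-polytope with $F\in\mathbb{R}^{p\times n}$ of full column rank and vertices $x_1,\dots,x_N$, and let $\mathscr{U}=\{u\in\mathbb{R}^m: Hu\le\mathbf{1}_q\}$ be a C-polytope with $H\in\mathbb{R}^{q\times m}$ of full column rank. Let $\delta\in\mathbb{R}^\ell$ be given, with associated matrices $A(\delta)\in\mathbb{R}^{n\times n}$, $B(\delta)\in\mathbb{R}^{n\times m}$. Set $G=\begin{bmatrix}H\\ FB(\delta)\end{bmatrix}\in\mathbb{R}^{(q+p)\times m}$ and, for each vertex $x_i$, $l^{(i)}=\begin{bmatrix}\mathbf{1}_q\\ \mathbf{1}_p-FA(\delta)x_i\end{bmatrix}\in\mathbb{R}^{q+p}$. Then the set $$\mathcal{L}_\delta=\{(C_1,\dots,C_N,d_1,\dots,d_N): C_i\in\mathbb{R}^{m\times\ell},\ d_i\in\mathbb{R}^m,\ C_i\delta+d_i\in\mathscr{U},\ A(\delta)x_i+B(\delta)(C_i\delta+d_i)\in\mathcal{S}\ \forall i\}$$ is nonempty if and only if, for every $i\in\{1,\dots,N\}$, there exist index sets $\mathcal{Q}\subset\{1,\dots,q\}$ and $\mathcal{P}\subset\{1,\dots,p\}$ such that the submatrix $G_{\mathcal{Q}\cup\mathcal{P}}\in\mathbb{R}^{m\times m}$ formed by rows $\mathcal{Q}$ of $H$ and rows $\mathcal{P}$ of $FB(\delta)$ is invertible and,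 with $l^{(i)}_{\mathcal{Q}\cup\mathcal{P}}$ the corresponding subvector of $l^{(i)}$, $$(H)_k\,G_{\mathcal{Q}\cup\mathcal{P}}^{-1}\,l^{(i)}_{\mathcal{Q}\cup\mathcal{P}}\le 1\quad\forall k\in\{1,\dots,q\}\setminus\mathcal{Q},$$ $$(FB(\delta))_k\,G_{\mathcal{Q}\cup\mathcal{P}}^{-1}\,l^{(i)}_{\mathcal{Q}\cup\mathcal{P}}\le 1-(FA(\delta)x_i)_k\quad\forall k\in\{1,\dots,p\}\setminus\mathcal{P}.$$
   Context: A C-polytope is a convex bounded polyhedron containing the origin in its interior. $(P)_k$ denotes the $k$-th row of a matrix $P$; for an index set $\mathcal{I}$, $P_{\mathcal{I}}$ (resp. $y_{\mathcal{I}}$) denotes the submatrix (subvector) of rows (entries) with indices in $\mathcal{I}$. $\mathbf{1}_p$ is the all-ones vector in $\mathbb{R}^p$. *)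

From HB Require Import structures.
From mathcomp Require Import all_boot all_order all_algebra.
From mathcomp Require Import reals.
Set Implicit Arguments. Unset Strict Implicit. Unset Printing Implicit Defensive.
Import Order.TTheory GRing.Theory Num.Theory.
Local Open Scope ring_scope.

Definition le_vec (R : realType) (k : nat) (x y : 'cV[R]_k) : Prop :=
  forall i, x i 0 <= y i 0.

Definition polyset (R : realType) (p n : nat) (F : 'M[R]_(p, n)) (x : 'cV[R]_n) : Prop :=
  le_vec (F *m x) (const_mx 1).

Definition bounded_set (R : realType) (n : nat) (S : 'cV[R]_n -> Prop) : Prop :=
  exists M : R, forall x, S x -> forall i, `|x i 0| <= M.

Definition origin_interior (R : realType) (n : nat) (S : 'cV[R]_n -> Prop) : Prop :=
  exists eps : R, 0 < eps /\ forall x : 'cV[R]_n, (forall i, `|x i 0| < eps) -> S x.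

(* C-polytope: convex (automatic for polyhedra, stated for completeness),
   bounded, containing the origin in its interior. *)
Definition convex_set (R : realType) (n : nat) (S : 'cV[R]_n -> Prop) : Prop :=
  forall x y (t : R), S x -> S y -> 0 <= t <= 1 -> S (t *: x + (1 - t) *: y).

Definition C_polytope (R : realType) (n : nat) (S : 'cV[R]_n -> Prop) : Prop :=
  [/\ convex_set S, bounded_set S & origin_interior S].

Definition is_vertex (R : realType) (n : nat) (S : 'cV[R]_n -> Prop) (x : 'cV[R]_n) : Prop :=
  S x /\ forall y z (t : R), S y -> S z -> 0 < t < 1 -> x = t *: y + (1 - t) *: z -> y = z.

(* Submatrix consisting of the rows with indices in the index set I
   (taken in increasing order). *)
Definition rowset_mx (R : Type) (k c : nat) (I : {set 'I_k}) (M : 'M[R]_(k, c))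
  : 'M[R]_(#|I|, c) := \matrix_(i, j) M (enum_val i) j.

(* Index set Q ∪ P inside the row indices of G = [H; F B]. *)
Definition QP_set (q p : nat) (Q : {set 'I_q}) (P : {set 'I_p}) : {set 'I_(q + p)} :=
  (lshift p @: Q) :|: (@rshift q p @: P).

From mathcomp Require Import all_boot all_order all_algebra zify.
From mathcomp Require Import reals.
Set Implicit Arguments. Unset Strict Implicit. Unset Printing Implicit Defensive.
Import Order.TTheory GRing.Theory Num.Theory.
Local Open Scope ring_scope.

(* For each vertex x_i the constraints on (C_i, d_i) only involve u = C_i delta + d_i
   and read G u <= l^(i), so L_delta is nonempty iff each polyhedron
   {u | G u <= l^(i)} is.  As H has full column rank, so has G, and such a
   nonempty polyhedron has a vertex: from a feasible point, moving along a kernel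
   direction of the active rows until a new constraint becomes tight strictly
   increases the rank of the active rows.  At a vertex, m independent active rows
   (those in Q and P) determine u = G_(Q,P)^-1 l_(Q,P), and feasibility of this
   point is exactly the stated inequalities on the remaining rows. *)

Section RowSelection.
Variables (F : fieldType) (K c : nat).
Implicit Types (S : {set 'I_K}) (M : 'M[F]_(K, c)).

Lemma rowset_mxEsub S M : rowset_mx S M = rowsub enum_val M.
Proof. by apply/matrixP => i j; rewrite !mxE. Qed.

Lemma mul_rowset_mx S M p (N : 'M[F]_(c, p)) :
  rowset_mx S M *m N = rowset_mx S (M *m N).
Proof. by rewrite !rowset_mxEsub mul_rowsub_mx. Qed.

Lemma rowset_mx_rowE S M k (kS : k \in S) :
  row (enum_rank_in kS k) (rowset_mx S M) = row k M.
Proof. by apply/rowP => j; rewrite !mxE enum_rankK_in. Qed.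

Lemma row_sub_rowset_mx S M k : k \in S -> (row k M <= rowset_mx S M)%MS.
Proof. by move=> kS; rewrite -(rowset_mx_rowE M kS) row_sub. Qed.

Lemma rowset_mxS S S' M : S \subset S' -> (rowset_mx S M <= rowset_mx S' M)%MS.
Proof.
move=> sSS'; apply/row_subP => i; rewrite rowset_mxEsub row_rowsub.
exact/row_sub_rowset_mx/(subsetP sSS')/enum_valP.
Qed.

Lemma rank_rowset_mx_lt S S' M k :
  S \subset S' -> k \in S' -> ~~ (row k M <= rowset_mx S M)%MS ->
  (\rank (rowset_mx S M) < \rank (rowset_mx S' M))%N.
Proof.
move=> sSS' kS' kS; apply: rank_ltmx; rewrite ltmxE rowset_mxS //=.
by apply: contra kS => /(submx_trans (row_sub_rowset_mx M kS')).
Qed.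

Lemma rowset_mx_colP S (v w : 'cV[F]_K) :
  rowset_mx S v = rowset_mx S w <-> {in S, forall k, v k 0 = w k 0}.
Proof.
split=> [/matrixP vw k kS | vw].
  by have := vw (enum_rank_in kS k) 0; rewrite !mxE enum_rankK_in.
by apply/matrixP => i j; rewrite !mxE ord1 vw ?enum_valP.
Qed.

Lemma rowset_mx_mul_eq0 S M (v : 'cV[F]_c) k :
  rowset_mx S M *m v = 0 -> k \in S -> (M *m v) k 0 = 0.
Proof.
move=> Mv0; have /rowset_mx_colP : rowset_mx S (M *m v) = rowset_mx S 0.
  by rewrite -mul_rowset_mx Mv0; apply/matrixP => i j; rewrite !mxE.
by move=> /[apply] ->; rewrite mxE.
Qed.

Lemma row_notin_rowset_mx S M (v : 'cV[F]_c) k :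
  rowset_mx S M *m v = 0 -> (M *m v) k 0 != 0 -> ~~ (row k M <= rowset_mx S M)%MS.
Proof.
move=> Mv0 Mvk; apply/negP => /submxP [w rowk].
have : row k (M *m v) = 0 by rewrite row_mul rowk -mulmxA Mv0 mulmx0.
move/rowP/(_ 0); rewrite !mxE => Mvk0.
by rewrite mxE Mvk0 eqxx in Mvk.
Qed.

End RowSelection.

Lemma mul_castmx_row (F : fieldType) m1 m2 n p (e : m1 = m2)
    (A : 'M[F]_(m1, n)) (B : 'M[F]_(n, p)) :
  castmx (e, erefl n) A *m B = castmx (e, erefl p) (A *m B).
Proof. by case: m2 / e; rewrite !castmx_id. Qed.

Lemma exists_unit_rowset_mx (F : fieldType) K m (S : {set 'I_K}) (M : 'M[F]_(K, m)) :
  \rank (rowset_mx S M) = m ->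
  exists (S' : {set 'I_K}) (h : #|S'| = m),
    S' \subset S /\ castmx (h, erefl m) (rowset_mx S' M) \in unitmx.
Proof.
move=> rkSM; set N := rowset_mx S M; pose f := maxrankfun N.
pose S' := [set enum_val (f i) | i in 'I_(\rank N)].
have f_inj : injective (fun i => enum_val (f i)).
  exact: inj_comp enum_val_inj (@maxrankfun_inj _ _ _ N).
have cardS' : #|S'| = m by rewrite card_imset // card_ord.
exists S', cardS'; split.
  by apply/subsetP => _ /imsetP [i _ ->]; apply: enum_valP.
rewrite -row_free_unit /row_free eqmx_cast eqn_leq rank_leq_col /=.
rewrite -[X in (X <= _)%N]rkSM -(eq_maxrowsub N) mxrankS //; apply/row_subP => i.
rewrite row_rowsub rowset_mxEsub row_rowsub row_sub_rowset_mx //.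
exact: (imset_f (fun i => enum_val (f i))).
Qed.

Section BasicSolution.
Variables (R : realFieldType) (K m : nat) (G : 'M[R]_(K, m)) (b : 'cV[R]_K).

Definition feasible (u : 'cV[R]_m) : Prop := forall k, (G *m u) k 0 <= b k 0.

Definition active (u : 'cV[R]_m) : {set 'I_K} := [set k | (G *m u) k 0 == b k 0].

Lemma mulmx_lineE (u v : 'cV[R]_m) t k :
  (G *m (u + t *: v)) k 0 = (G *m u) k 0 + t * (G *m v) k 0.
Proof. by rewrite mulmxDr -scalemxAr [LHS]mxE [X in _ + X]mxE. Qed.

Lemma ratio_test u v k1 : feasible u -> 0 < (G *m v) k1 0 ->
  exists t, feasible (u + t *: v) /\
    exists2 k, 0 < (G *m v) k 0 & k \in active (u + t *: v).
Proof.
move=> fu Gvk1; pose incr k := 0 < (G *m v) k 0.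
pose ratio k := (b k 0 - (G *m u) k 0) / (G *m v) k 0.
have [k0 Gvk0 ratio_min] := @arg_minP _ _ _ k1 incr ratio Gvk1.
set t := ratio k0 in ratio_min *.
have t_ge0 : 0 <= t by rewrite divr_ge0 ?subr_ge0 // ltW.
exists t; split; last first.
  exists k0 => //.
  by rewrite inE mulmx_lineE /t /ratio divfK ?lt0r_neq0 // addrC subrK.
move=> k; rewrite mulmx_lineE -lerBrDl.
have [Gvk | ] := boolP (incr k); first by rewrite -ler_pdivlMr // ratio_min.
rewrite -leNgt => Gvk_le0.
by rewrite (le_trans (mulr_ge0_le0 t_ge0 Gvk_le0)) ?subr_ge0.
Qed.

Lemma castmx_rowset_mulmx_eqP (S : {set 'I_K}) (h : #|S| = m) (w : 'cV[R]_m) :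
  castmx (h, erefl m) (rowset_mx S G) *m w = castmx (h, erefl 1%N) (rowset_mx S b)
  <-> {in S, forall k, (G *m w) k 0 = b k 0}.
Proof.
rewrite mul_castmx_row mul_rowset_mx -rowset_mx_colP.
by split=> [/(can_inj (castmxK _ _)) | ->].
Qed.

Hypothesis rankG : \rank G = m.

Lemma exists_ker_dir (S : {set 'I_K}) : (\rank (rowset_mx S G) < m)%N ->
  exists (v : 'cV[R]_m) k, rowset_mx S G *m v = 0 /\ 0 < (G *m v) k 0.
Proof.
move=> rkS; pose v0 : 'cV[R]_m := (nz_row (kermx (rowset_mx S G)^T))^T.
have Sv0 : rowset_mx S G *m v0 = 0.
  apply: trmx_inj; rewrite trmx_mul trmxK trmx0.
  by apply/sub_kermxP; apply: nz_row_sub.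
have v0_neq0 : v0 != 0.
  by rewrite trmx_eq0 nz_row_eq0 -mxrank_eq0 mxrank_ker mxrank_tr subn_eq0 -ltnNge.
have : G *m v0 != 0.
  rewrite -trmx_eq0 trmx_mul mulmx_free_eq0; first by rewrite trmx_eq0.
  by rewrite /row_free mxrank_tr rankG.
case/matrix0Pn => k [j]; rewrite ord1 => Gv0k.
have [Gv0k_gt0 | Gv0k_lt0 | Gv0k_eq0] := ltrgt0P ((G *m v0) k 0).
- by exists v0, k.
- by exists (- v0), k; rewrite !mulmxN Sv0 oppr0 mxE oppr_gt0.
- by rewrite Gv0k_eq0 eqxx in Gv0k.
Qed.

Lemma feasible_active_rank_lt u :
  feasible u -> (\rank (rowset_mx (active u) G) < m)%N ->
  exists u', feasible u' /\
    (\rank (rowset_mx (active u) G) < \rank (rowset_mx (active u') G))%N.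
Proof.
move=> fu rk_lt; have [v [k1 [Sv Gvk1]]] := exists_ker_dir rk_lt.
have [t [fu' [k0 Gvk0 k0_act]]] := ratio_test fu Gvk1.
exists (u + t *: v); split=> //; apply: (rank_rowset_mx_lt (k := k0)) => //.
  apply/subsetP => k k_act; move: (k_act); rewrite !inE mulmx_lineE.
  by rewrite (rowset_mx_mul_eq0 Sv k_act) mulr0 addr0.
by apply: row_notin_rowset_mx Sv _; rewrite gt_eqF.
Qed.

Lemma exists_feasible_active_full u : feasible u ->
  exists u', feasible u' /\ \rank (rowset_mx (active u') G) = m.
Proof.
have [d] := ubnP (m - \rank (rowset_mx (active u) G)).
elim: d u => // d IH u d_gt fu.
have [rk_lt | rk_ge] := ltnP (\rank (rowset_mx (active u) G)) m.
  have [u' [fu' rk_lt']] := feasible_active_rank_lt fu rk_lt.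
  by apply: (IH u') => //; lia.
by exists u; split=> //; apply/eqP; rewrite eqn_leq rank_leq_col.
Qed.

Theorem feasible_basic_solution :
  (exists u, feasible u) <->
  exists (S : {set 'I_K}) (h : #|S| = m),
    let Gs := castmx (h, erefl m) (rowset_mx S G) in
    let bs := castmx (h, erefl 1%N) (rowset_mx S b) in
    Gs \in unitmx /\ forall k, k \notin S -> (G *m (invmx Gs *m bs)) k 0 <= b k 0.
Proof.
split=> [[u /exists_feasible_active_full [u' [fu' rk_act]]] | [S [h [Gs_unit off_S]]]].
  have [S [h [S_act Gs_unit]]] := exists_unit_rowset_mx rk_act.
  exists S, h => Gs bs; suff -> : invmx Gs *m bs = u' by split=> // k _.
  suff <- : Gs *m u' = bs by rewrite mulKmx.
  by apply/castmx_rowset_mulmx_eqP => k /(subsetP S_act); rewrite inE => /eqP.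
exists (invmx (castmx (h, erefl m) (rowset_mx S G)) *m
        castmx (h, erefl 1%N) (rowset_mx S b)) => k.
have [kS | /off_S //] := boolP (k \in S).
by rewrite (iffLR (castmx_rowset_mulmx_eqP h _) (mulKVmx Gs_unit _) k kS).
Qed.

End BasicSolution.

Section QPSet.
Variables q p : nat.
Implicit Types (Q : {set 'I_q}) (P : {set 'I_p}).

Lemma mem_QP_set_l Q P k : (lshift p k \in QP_set Q P) = (k \in Q).
Proof.
rewrite !inE mem_imset; last exact: lshift_inj.
by case: imsetP => [[k' _ /eqP]|_]; rewrite ?eq_lrshift ?orbF.
Qed.

Lemma mem_QP_set_r Q P k : (rshift q k \in QP_set Q P) = (k \in P).
Proof.
rewrite !inE mem_imset; last exact: rshift_inj.
by case: imsetP => [[k' _ /eqP]|_]; rewrite ?eq_rlshift.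
Qed.

Lemma QP_set_preimage (S : {set 'I_(q + p)}) :
  QP_set [set k | lshift p k \in S] [set k | rshift q k \in S] = S.
Proof.
apply/setP => k; case: (split_ordP k) => k' ->.
  by rewrite mem_QP_set_l inE.
by rewrite mem_QP_set_r inE.
Qed.

Lemma exists_QP_set (Pr : {set 'I_(q + p)} -> Prop) :
  (exists S, Pr S) <-> exists Q P, Pr (QP_set Q P).
Proof.
split=> [[S PrS] | [Q [P PrQP]]]; last by exists (QP_set Q P).
by exists [set k | lshift p k \in S], [set k | rshift q k \in S]; rewrite QP_set_preimage.
Qed.

End QPSet.

Lemma row_mul_entry (R : ringType) K m (M : 'M[R]_(K, m)) (w : 'cV[R]_m) k :
  (row k M *m w) 0 0 = (M *m w) k 0.
Proof. by rewrite -row_mul mxE. Qed.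

Lemma rank_col_mx_full (F : fieldType) q p m (H : 'M[F]_(q, m)) (X : 'M[F]_(p, m)) :
  \rank H = m -> \rank (col_mx H X) = m.
Proof.
move=> rkH; apply/eqP; rewrite eqn_leq rank_leq_col /= -[X in (X <= _)%N]rkH.
by rewrite mxrankS // -addsmxE addsmxSl.
Qed.

Section ColMx.
Variables (R : realFieldType) (q p m : nat) (G1 : 'M[R]_(q, m)) (G2 : 'M[R]_(p, m)).
Variables (b1 : 'cV[R]_q) (b2 : 'cV[R]_p).

Lemma feasible_col_mx w :
  feasible (col_mx G1 G2) (col_mx b1 b2) w <-> feasible G1 b1 w /\ feasible G2 b2 w.
Proof.
rewrite /feasible mul_col_mx; split=> [fw | [fw1 fw2] k].
  by split=> k; [have := fw (lshift p k) | have := fw (rshift q k)];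
    rewrite ?col_mxEu ?col_mxEd.
by case: (split_ordP k) => k' ->; rewrite ?col_mxEu ?col_mxEd.
Qed.

Lemma col_mx_le_offP Q P (w : 'cV[R]_m) :
  (forall k, k \notin QP_set Q P -> (col_mx G1 G2 *m w) k 0 <= col_mx b1 b2 k 0) <->
  (forall k, k \notin Q -> (G1 *m w) k 0 <= b1 k 0) /\
  (forall k, k \notin P -> (G2 *m w) k 0 <= b2 k 0).
Proof.
rewrite mul_col_mx; split=> [off | [offQ offP] k].
  by split=> k; [have := off (lshift p k) | have := off (rshift q k)];
    rewrite ?mem_QP_set_l ?mem_QP_set_r ?col_mxEu ?col_mxEd.
case: (split_ordP k) => k' ->;
  rewrite ?mem_QP_set_l ?mem_QP_set_r ?col_mxEu ?col_mxEd; [exact: offQ | exact: offP].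
Qed.

Lemma basic_solution_col_mx : \rank (col_mx G1 G2) = m ->
  (exists u, feasible (col_mx G1 G2) (col_mx b1 b2) u) <->
  exists Q P (h : #|QP_set Q P| = m),
    let Gs := castmx (h, erefl m) (rowset_mx (QP_set Q P) (col_mx G1 G2)) in
    let bs := castmx (h, erefl 1%N) (rowset_mx (QP_set Q P) (col_mx b1 b2)) in
    [/\ Gs \in unitmx,
        forall k, k \notin Q -> (G1 *m (invmx Gs *m bs)) k 0 <= b1 k 0
      & forall k, k \notin P -> (G2 *m (invmx Gs *m bs)) k 0 <= b2 k 0].
Proof.
move=> rkG; rewrite feasible_basic_solution // exists_QP_set.
split=> [[Q [P [h [Gs_unit /col_mx_le_offP [offQ offP]]]]] | [Q [P [h [Gs_unit offQ offP]]]]].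
  by exists Q, P, h.
by exists Q, P, h; split=> //; apply/col_mx_le_offP.
Qed.

End ColMx.

Lemma polyset_affine (R : realType) p n m (F : 'M[R]_(p, n)) (A : 'M[R]_n)
    (B : 'M[R]_(n, m)) (x : 'cV[R]_n) (u : 'cV[R]_m) :
  polyset F (A *m x + B *m u) <-> feasible (F *m B) (const_mx 1 - F *m A *m x) u.
Proof.
rewrite /polyset /le_vec /feasible mulmxDr !mulmxA.
by split=> Fu k; have := Fu k; rewrite !mxE -lerBrDl.
Qed.

Theorem lemma2 (R : realType) (n m l N p q : nat)
  (F : 'M[R]_(p, n)) (H : 'M[R]_(q, m))
  (xs : 'I_N -> 'cV[R]_n)
  (A : 'cV[R]_l -> 'M[R]_n) (B : 'cV[R]_l -> 'M[R]_(n, m)) (delta : 'cV[R]_l) :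
  (m <= n)%N ->
  C_polytope (polyset F) ->
  \rank F = n ->
  (forall x, is_vertex (polyset F) x <-> exists i, x = xs i) ->
  injective xs ->
  C_polytope (polyset H) ->
  \rank H = m ->
  let G : 'M[R]_(q + p, m) := col_mx H (F *m B delta) in
  let lv (i : 'I_N) : 'cV[R]_(q + p) :=
    col_mx (const_mx 1) (const_mx 1 - F *m A delta *m xs i) in
  (exists (C : 'I_N -> 'M[R]_(m, l)) (d : 'I_N -> 'cV[R]_m),
     forall i, polyset H (C i *m delta + d i) /\
               polyset F (A delta *m xs i + B delta *m (C i *m delta + d i)))
  <->
  (forall i : 'I_N, exists (Q : {set 'I_q}) (P : {set 'I_p})
     (h : #|QP_set Q P| = m),
     let Gs : 'M[R]_m := castmx (h, erefl m) (rowset_mx (QP_set Q P) G) in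
     let ls : 'cV[R]_m := castmx (h, erefl 1%N) (rowset_mx (QP_set Q P) (lv i)) in
     [/\ Gs \in unitmx,
         forall k : 'I_q, k \notin Q -> (row k H *m (invmx Gs *m ls)) 0 0 <= 1
       & forall k : 'I_p, k \notin P ->
           (row k (F *m B delta) *m (invmx Gs *m ls)) 0 0
             <= 1 - (F *m A delta *m xs i) k 0]).
Proof.
move=> _ _ _ _ _ _ rkH G lv.
have rkG : \rank G = m by rewrite rank_col_mx_full.
have feasibleE i u : polyset H u /\ polyset F (A delta *m xs i + B delta *m u)
    <-> feasible G (lv i) u.
  by rewrite feasible_col_mx polyset_affine.
have one_entry (k : 'I_q) : (const_mx 1 : 'cV[R]_q) k 0 = 1 by rewrite mxE.
have slack_entry i k : (const_mx 1 - F *m A delta *m xs i) k 0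
    = 1 - (F *m A delta *m xs i) k 0 by rewrite !mxE.
apply: (iff_trans (B := forall i, exists u, feasible G (lv i) u)).
  split=> [[C [d Cd]] i | /fin_all_exists [u fu]].
    by exists (C i *m delta + d i); apply/feasibleE.
  by exists (fun=> 0), u => i; rewrite mul0mx add0r; apply/feasibleE.
split=> basic i.
  have /(basic_solution_col_mx _ _ rkG) [Q [P [h [Gs_unit offQ offP]]]] := basic i.
  exists Q, P, h; split=> // k kQP.
    by rewrite row_mul_entry -(one_entry k) offQ.
  by rewrite row_mul_entry -(slack_entry i k) offP.
apply/(basic_solution_col_mx _ _ rkG).
have [Q [P [h [Gs_unit offQ offP]]]] := basic i.
exists Q, P, h; split=> // k kQP.
  by rewrite -row_mul_entry one_entry offQ.
by rewrite -row_mul_entry slack_entry offP.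
Qed.
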